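(* Let $G=(U,V,E)$ be a path-restricted ordered bipartite graph, let $P$ be a forward path in $G$, and let $w$ be a vertex of $G$ not on $P$. Then at most one edge of $G$ joins $w$ to a vertex of $P$.
   Context: An ordered bipartite graph is $G=(U,V,E)$ where $U,V$ are disjoint finite sets, each carrying a strict total order (both written $<$), and $E\subseteq U\times V$. A path is a sequence of edges in which consecutive edges share a vertex. A path visiting the vertices of $U$ in the order $u_1,\dots,u_k$ and those of $V$ in the order $v_1,\dots,v_l$ is a forward path if either $u_1<\dots<u_k$ and $v_1<\dots<v_l$, or $u_1>\dots>u_k$ and $v_1>\dots>v_l$. For $x\le y$ in $U$ write $\langle x,y\rangle=\{u\in U: x\le u\le y\}$, and similarly in $V$. If $u_a<u_b$ are the smallest and largest $U$-vertices and $v_c<v_d$ the smallest and largest $V$-vertices of a forward path $P$, the range of $P$ is $\{\langle u_a,u_b\rangle,\langle v_c,v_d\rangle\}$. A vertex of $P$ is non-terminal if it is adjacent along $P$ to two vertices of $P$. An edge is a back edge to $P$ if either it is $(u_a,v_j)$ with $v_j\in\langle v_c,v_d\rangle$ and $v_j>v'$ for some non-terminal vertex $v'\in V$ of $P$, or it is $(u_i,v_c)$ with $u_i\in\langle u_a,u_b\rangle$ and $u_i>u'$ for some non-terminal vertex $u'\in U$ of $P$. $G$ is a path-restricted ordered bipartite graph (PRBG) if no forward path in $G$ has a back edge in $E$. *)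

From mathcomp Require Import all_boot all_order.
Set Implicit Arguments. Unset Strict Implicit. Unset Printing Implicit Defensive.
Import Order.TTheory.
Local Open Scope order_scope.

(* Ordered bipartite graph G = (U, V, E): U, V finite sets with strict total
   orders (finOrderType), E : {set U * V}.  Vertices of G are elements of U + V. *)
Section OBG.
Variables (dU dV : Order.disp_t) (U : finOrderType dU) (V : finOrderType dV).
Variable E : {set U * V}.

Definition adj (x y : U + V) : bool :=
  match x, y with
  | inl u, inr v => (u, v) \in E
  | inr v, inl u => (u, v) \in E
  | _, _ => false
  end.

Definition is_path (p : seq (U + V)) : bool :=
  match p with
  | x :: q => [&& 0 < size q, path adj x q & uniq p]
  | [::] => false
  end.

Definition Uvs (p : seq (U + V)) : seq U :=
  pmap (fun x => if x is inl u then Some u else None) p.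
Definition Vvs (p : seq (U + V)) : seq V :=
  pmap (fun x => if x is inr v then Some v else None) p.

Definition forward_path (p : seq (U + V)) : bool :=
  is_path p &&
  ((sorted <%O (Uvs p) && sorted <%O (Vvs p)) ||
   (sorted >%O (Uvs p) && sorted >%O (Vvs p))).

(* non-terminal vertices: those adjacent along p to two vertices of p,
   i.e. all vertices except the first and the last *)
Definition nonterminal (p : seq (U + V)) : seq (U + V) :=
  drop 1 (take (size p).-1 p).

Definition is_min {d} {T : orderType d} (s : seq T) (x : T) : bool :=
  (x \in s) && all (fun y => x <= y) s.
Definition is_max {d} {T : orderType d} (s : seq T) (x : T) : bool :=
  (x \in s) && all (fun y => y <= x) s.

(* (u, v) is a back edge to p; range of p is {<u_a,u_b>, <v_c,v_d>} *)
Definition back_edge (p : seq (U + V)) (u : U) (v : V) : Prop :=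
  (is_min (Uvs p) u /\
   (exists vc vd, [/\ is_min (Vvs p) vc, is_max (Vvs p) vd & vc <= v <= vd]) /\
   (exists v', inr v' \in nonterminal p /\ v' < v))
  \/
  (is_min (Vvs p) v /\
   (exists ua ub, [/\ is_min (Uvs p) ua, is_max (Uvs p) ub & ua <= u <= ub]) /\
   (exists u', inl u' \in nonterminal p /\ u' < u)).

Definition PRBG : Prop :=
  forall p u v, forward_path p -> (u, v) \in E -> ~ back_edge p u v.

End OBG.

From Stdlib Require Import Setoid.
From mathcomp Require Import all_boot all_order.
Set Implicit Arguments. Unset Strict Implicit. Unset Printing Implicit Defensive.
Import Order.TTheory.
Local Open Scope order_scope.

(* Reversing P and transposing the graph, we may assume that P is increasing
   and that w lies in U.  If w had two neighbours x < y on P, the segment of P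
   from x to y would start x, u, v with x < v <= y.  If u < w, the forward path
   u x w y has the back edge (u, v); if w < u, then w lies below every U-vertex
   of the segment, and w followed by the segment is a forward path with the
   back edge (w, y). *)

Lemma count_gt1_split (T : eqType) (a : pred T) (s : seq T) : (1 < count a s)%N ->
  exists s1 x s2 y s3, [/\ s = s1 ++ (x :: rcons s2 y) ++ s3, a x & a y].
Proof.
elim: s => [//|z s IHs] /=; case az: (a z) => /= cnt_s; last first.
  have [s1 [x [s2 [y [s3 [-> ax ay]]]]]] := IHs cnt_s.
  by exists (z :: s1), x, s2, y, s3.
have /hasP[y + ay] : has a s by rewrite has_count.
case/splitPr=> s2 s3; exists [::], z, s2, y, s3.
by rewrite cat0s cat_rcons.
Qed.

Section SortedExtrema.
Variables (d : Order.disp_t) (T : orderType d).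
Implicit Types (x y z : T) (s t : seq T).

Lemma sorted_lt_last s x : sorted <%O (rcons s x) -> all (fun y => y < x) s.
Proof. by rewrite (sorted_pairwise lt_trans) pairwise_rcons => /andP[]. Qed.

Lemma is_min_sorted_head x s : sorted <%O (x :: s) -> is_min (x :: s) x.
Proof.
move=> /(order_path_min lt_trans) x_lt_s; rewrite /is_min mem_head /= lexx.
by apply/allP=> y /(allP x_lt_s)/ltW.
Qed.

Lemma is_max_sorted_last s x : sorted <%O (rcons s x) -> is_max (rcons s x) x.
Proof.
move=> /sorted_lt_last s_lt_x; rewrite /is_max mem_rcons mem_head all_rcons lexx.
by apply/allP=> y /(allP s_lt_x)/ltW.
Qed.

Lemma sorted_range t a b z : sorted <%O t -> a \in t -> b \in t -> a <= z <= b ->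
  exists lo hi, [/\ is_min t lo, is_max t hi & lo <= z <= hi].
Proof.
case/lastP: t => // t hi; case: t => [|lo t] sorted_t.
  rewrite !inE => /eqP-> /eqP->; exists hi, hi.
  by rewrite /is_min /is_max !inE eqxx /= lexx.
have min_lo := is_min_sorted_head sorted_t.
have max_hi := is_max_sorted_last sorted_t.
move=> a_t b_t /andP[az zb]; exists lo, hi; split => //.
by rewrite (le_trans _ az) ?(le_trans zb) //; [move: max_hi | move: min_lo]
   => /andP[_ /allP]; apply.
Qed.

End SortedExtrema.

Section Paths.
Variables (dU dV : Order.disp_t) (U : finOrderType dU) (V : finOrderType dV).
Variable E : {set U * V}.
Implicit Types (p q s : seq (U + V)) (z : U + V).

Lemma adjC : symmetric (adj E).
Proof. by case=> ? [] ?. Qed.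

Lemma is_pathE p : is_path E p = [&& (1 < size p)%N, sorted (adj E) p & uniq p].
Proof. by case: p. Qed.

Lemma Uvs_cat p q : Uvs (p ++ q) = Uvs p ++ Uvs q.
Proof. exact: pmap_cat. Qed.

Lemma Vvs_cat p q : Vvs (p ++ q) = Vvs p ++ Vvs q.
Proof. exact: pmap_cat. Qed.

Lemma Uvs_rev p : Uvs (rev p) = rev (Uvs p).
Proof.
by elim: p => // z p IHp; rewrite rev_cons -cats1 Uvs_cat IHp; case: z => a;
   rewrite /= ?cats0 ?cats1 ?rev_cons.
Qed.

Lemma Vvs_rev p : Vvs (rev p) = rev (Vvs p).
Proof.
by elim: p => // z p IHp; rewrite rev_cons -cats1 Vvs_cat IHp; case: z => a;
   rewrite /= ?cats0 ?cats1 ?rev_cons.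
Qed.

Lemma nonterminal_cons_rcons z p z' : nonterminal (z :: rcons p z') = p.
Proof.
by rewrite /nonterminal -rcons_cons size_rcons -cats1 take_size_cat //= drop0.
Qed.

Lemma is_path_rev p : is_path E (rev p) = is_path E p.
Proof.
rewrite !is_pathE size_rev rev_uniq rev_sorted.
by congr [&& _, _ & _]; apply: eq_sorted => x y; rewrite adjC.
Qed.

Lemma is_path_infix p s q : (1 < size s)%N -> is_path E (p ++ s ++ q) -> is_path E s.
Proof.
rewrite !is_pathE => -> /and3P[_ /cat_sorted2[_ /cat_sorted2[-> _]]].
by rewrite !cat_uniq => /and3P[_ _ /andP[]].
Qed.

Lemma is_path_cons z p :
  is_path E p -> adj E z (head z p) -> z \notin p -> is_path E (z :: p).
Proof.
by case: p => // a p; rewrite !is_pathE /= => /and3P[_ -> ->] -> ->.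
Qed.

Definition increasing_path p :=
  [&& is_path E p, sorted <%O (Uvs p) & sorted <%O (Vvs p)].

Lemma increasing_path_forward p : increasing_path p -> forward_path E p.
Proof. by case/and3P=> path_p sU sV; rewrite /forward_path path_p sU sV. Qed.

Lemma forward_path_increasing p :
  forward_path E p -> increasing_path p \/ increasing_path (rev p).
Proof.
case/andP=> path_p /orP[/andP[sU sV] | /andP[sU sV]]; [left | right].
  by rewrite /increasing_path path_p sU sV.
by rewrite /increasing_path is_path_rev Uvs_rev Vvs_rev !rev_sorted path_p sU sV.
Qed.

Lemma increasing_path_infix p s q :
  (1 < size s)%N -> increasing_path (p ++ s ++ q) -> increasing_path s.
Proof.
move=> s_gt1 /and3P[/(is_path_infix s_gt1) path_s].
rewrite /increasing_path path_s !Uvs_cat !Vvs_cat.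
by move=> /cat_sorted2[_ /cat_sorted2[-> _]] /cat_sorted2[_ /cat_sorted2[-> _]].
Qed.

Lemma increasing_path_cons_inl (w : U) p :
  increasing_path p -> adj E (inl w) (head (inl w) p) -> inl w \notin p ->
  all (fun u => w < u) (Uvs p) -> increasing_path (inl w :: p).
Proof.
case/and3P=> path_p sU sV w_p notin_p lt_w.
by rewrite /increasing_path is_path_cons //= (path_sortedE lt_trans) lt_w sU.
Qed.

Lemma back_edge_at_minU p u v a b v' :
  sorted <%O (Vvs p) -> is_min (Uvs p) u -> a \in Vvs p -> b \in Vvs p ->
  a <= v <= b -> inr v' \in nonterminal p -> v' < v -> back_edge p u v.
Proof.
move=> sV min_u ap bp avb nt_v' lt_v'; left; split=> //.
by split; [exact: sorted_range avb | exists v'].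
Qed.

Lemma mem_Vvs p (v : V) : (v \in Vvs p) = (inr v \in p).
Proof. by elim: p => // -[u|v'] p IHp; rewrite /= !inE IHp. Qed.

Lemma adj_inl (u : U) z : adj E (inl u) z -> exists2 v, z = inr v & (u, v) \in E.
Proof. by case: z => // v; exists v. Qed.

Lemma is_path_VV_start (x y : V) s : is_path E (inr x :: rcons s (inr y)) ->
  exists u v t, [/\ rcons s (inr y) = inl u :: inr v :: t, (u, x) \in E & (u, v) \in E].
Proof.
case: s => [|z s]; first by case/and3P.
rewrite is_pathE => /and3P[_ /= /andP[xz path_z] _]; case: z xz path_z => // u ux.
case: s => [|[//|v] s] /=; first by rewrite andbT; exists u, y, [::].
by case/andP=> uv _; exists u, v, (rcons s (inr y)).
Qed.

End Paths.

Section PathRestricted.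
Variables (dU dV : Order.disp_t) (U : finOrderType dU) (V : finOrderType dV).
Variable E : {set U * V}.
Hypothesis prbg : PRBG E.

Lemma increasing_path_no_back_edge p u v :
  increasing_path E p -> (u, v) \in E -> ~ back_edge p u v.
Proof. by move/increasing_path_forward; apply: prbg. Qed.

Lemma no_back_chord_of_short_path (u w : U) (x y v : V) :
  (u, x) \in E -> (w, x) \in E -> (w, y) \in E -> (u, v) \in E ->
  u < w -> x < v <= y -> False.
Proof.
move=> ux wx wy uv u_lt_w /andP[x_lt_v v_le_y].
have x_lt_y := lt_le_trans x_lt_v v_le_y.
set Q : seq (U + V) := [:: inl u; inr x; inl w; inr y].
have inc_Q : increasing_path E Q.
  rewrite /increasing_path /is_path /= ux wx wy u_lt_w x_lt_y !inE.
  by rewrite (inj_eq inl_inj) (inj_eq inr_inj) (lt_eqF u_lt_w) (lt_eqF x_lt_y).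
apply: (increasing_path_no_back_edge inc_Q uv).
apply: (back_edge_at_minU (a := x) (b := y) (v' := x)) => //.
- by rewrite /= andbT x_lt_y.
- by rewrite /is_min /= !inE eqxx lexx (ltW u_lt_w).
- by rewrite !inE eqxx.
- by rewrite !inE eqxx orbT.
- by rewrite (ltW x_lt_v).
- by rewrite /nonterminal /= !inE eqxx.
Qed.

Lemma common_neighbour_below (w : U) (x y : V) s :
  increasing_path E (inr x :: rcons s (inr y)) -> inl w \notin s ->
  (w, x) \in E -> (w, y) \in E -> all (fun u => w < u) (Uvs s) -> False.
Proof.
rewrite -rcons_cons; set S := rcons _ (inr y) => inc_S w_s wx wy w_lt_s.
have Uvs_S : Uvs S = Uvs s by rewrite /S -cats1 Uvs_cat cats0.
have Vvs_S : Vvs S = rcons (x :: Vvs s) y by rewrite /S -!cats1 Vvs_cat.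
have inc_Q : increasing_path E (inl w :: S).
  apply: increasing_path_cons_inl; rewrite ?Uvs_S //.
  by rewrite mem_rcons !inE.
have x_lt_y : x < y.
  by case/and3P: inc_S => _ _; rewrite Vvs_S => /sorted_lt_last /andP[].
have y_Q : y \in Vvs (inl w :: S) by rewrite mem_Vvs mem_behead // mem_rcons mem_head.
apply: (increasing_path_no_back_edge inc_Q wy).
apply: (back_edge_at_minU _ _ y_Q y_Q (v' := x)).
- by case/and3P: inc_Q.
- by case/and3P: inc_Q => _ + _; apply: is_min_sorted_head.
- by rewrite lexx.
- by rewrite nonterminal_cons_rcons mem_head.
- exact: x_lt_y.
Qed.

Lemma no_common_neighbour (w : U) (x y : V) s :
  increasing_path E (inr x :: rcons s (inr y)) -> inl w \notin s ->
  (w, x) \in E -> (w, y) \in E -> False.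
Proof.
move=> inc_S w_s wx wy; have [path_S sU sV] := and3P inc_S.
have [u [v [t [def_t ux uv]]]] := is_path_VV_start path_S.
have u_s : inl u \in s by move: (mem_head (inl u) (inr v :: t)); rewrite -def_t mem_rcons.
have Uvs_s : Uvs s = u :: Uvs t.
  by move: (congr1 (@Uvs _ _ U V) def_t); rewrite -cats1 Uvs_cat cats0.
have /= sUt : sorted <%O (Uvs (inl u :: inr v :: t)) by rewrite -def_t.
have /= : sorted <%O (x :: Vvs (inl u :: inr v :: t)) by rewrite -def_t.
case/andP=> x_lt_v sVt.
case: (ltgtP w u) => [w_lt_u | u_lt_w | eq_wu]; last by rewrite eq_wu u_s in w_s.
  apply: (common_neighbour_below inc_S w_s wx wy).
  by rewrite Uvs_s; apply: (order_path_min lt_trans); rewrite /= w_lt_u; exact: sUt.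
apply: (no_back_chord_of_short_path ux wx wy uv u_lt_w); rewrite x_lt_v /=.
have y_t : y \in v :: Vvs t.
  by rewrite -[_ :: _]/(Vvs (inl u :: inr v :: t)) mem_Vvs -def_t mem_rcons mem_head.
by case/andP: (is_min_sorted_head sVt) => _ /allP/(_ y y_t).
Qed.

Lemma increasing_path_count_adj_inl (w : U) p :
  increasing_path E p -> inl w \notin p -> (count (adj E (inl w)) p <= 1)%N.
Proof.
move=> inc_p w_p; rewrite leqNgt; apply/negP.
case/count_gt1_split=> p1 [a [s [b [p3 [def_p wa wb]]]]].
have [[x def_a wx] [y def_b wy]] := (adj_inl wa, adj_inl wb).
subst a b; apply: (no_common_neighbour (s := s) _ _ wx wy).
  apply: (increasing_path_infix (p := p1) (q := p3)); last by rewrite -def_p.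
  by rewrite /= size_rcons.
apply: contra w_p => w_s.
by rewrite def_p !mem_cat inE mem_rcons inE w_s !orbT.
Qed.

Lemma forward_path_count_adj_inl (w : U) p :
  forward_path E p -> inl w \notin p -> (count (adj E (inl w)) p <= 1)%N.
Proof.
case/forward_path_increasing=> [inc_p|inc_rp] w_p.
  exact: increasing_path_count_adj_inl.
by rewrite -count_rev increasing_path_count_adj_inl ?mem_rev.
Qed.

End PathRestricted.

Definition swap_sum (A B : Type) (z : A + B) : B + A :=
  match z with inl a => inr a | inr b => inl b end.

Lemma swap_sumK (A B : Type) : cancel (@swap_sum A B) (@swap_sum B A).
Proof. by case. Qed.

Lemma nonterminal_map (dU dV dU' dV' : Order.disp_t) (U : finOrderType dU)
    (V : finOrderType dV) (U' : finOrderType dU') (V' : finOrderType dV')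
    (f : U + V -> U' + V') p :
  nonterminal (map f p) = map f (nonterminal p).
Proof. by rewrite /nonterminal size_map map_drop map_take. Qed.

Section Transpose.
Variables (dU dV : Order.disp_t) (U : finOrderType dU) (V : finOrderType dV).
Implicit Types (p : seq (U + V)) (E : {set U * V}).

Local Notation swap := (@swap_sum U V).

Definition transpose_edges E : {set V * U} := [set e | (e.2, e.1) \in E].

Lemma mem_transpose_edges E u v : ((v, u) \in transpose_edges E) = ((u, v) \in E).
Proof. by rewrite inE. Qed.

Lemma adj_transpose E a b : adj (transpose_edges E) (swap a) (swap b) = adj E a b.
Proof. by case: a b => a [] b //=; rewrite mem_transpose_edges. Qed.

Lemma Uvs_swap p : Uvs (map swap p) = Vvs p.
Proof. by elim: p => // -[u|v] p /= ->. Qed.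

Lemma Vvs_swap p : Vvs (map swap p) = Uvs p.
Proof. by elim: p => // -[u|v] p /= ->. Qed.

Lemma mem_inl_swap p (v : V) : (inl v \in map swap p) = (inr v \in p).
Proof. by rewrite -(mem_map (can_inj (@swap_sumK U V))). Qed.

Lemma mem_inr_swap p (u : U) : (inr u \in map swap p) = (inl u \in p).
Proof. by rewrite -(mem_map (can_inj (@swap_sumK U V))). Qed.

Lemma is_path_transpose E p : is_path (transpose_edges E) (map swap p) = is_path E p.
Proof.
rewrite !is_pathE size_map sorted_map (map_inj_uniq (can_inj (@swap_sumK U V))).
by congr [&& _, _ & _]; apply: eq_sorted => a b; apply: adj_transpose.
Qed.

Lemma forward_path_transpose E p :
  forward_path (transpose_edges E) (map swap p) = forward_path E p.
Proof.
rewrite /forward_path is_path_transpose Uvs_swap Vvs_swap.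
by congr (_ && (_ || _)); rewrite andbC.
Qed.

Lemma back_edge_transpose p u v : back_edge (map swap p) v u <-> back_edge p u v.
Proof.
rewrite /back_edge Uvs_swap Vvs_swap nonterminal_map.
setoid_rewrite mem_inl_swap; setoid_rewrite mem_inr_swap.
by split; case; [right | left | right | left].
Qed.

Lemma count_adj_transpose E z p :
  count (adj (transpose_edges E) (swap z)) (map swap p) = count (adj E z) p.
Proof. by rewrite count_map; apply: eq_count => a; apply: adj_transpose. Qed.

Lemma PRBG_transpose E : PRBG E -> PRBG (transpose_edges E).
Proof.
move=> prbg p v u; rewrite -(mapK (@swap_sumK V U) p) forward_path_transpose => fwd.
by rewrite mem_transpose_edges => uv /back_edge_transpose; apply: prbg.
Qed.

End Transpose.

Local Close Scope order_scope.

Theorem corollary1 (dU dV : Order.disp_t) (U : finOrderType dU)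
  (V : finOrderType dV) (E : {set U * V}) (P : seq (U + V)) (w : U + V) :
  PRBG E -> forward_path E P -> w \notin P ->
  count (adj E w) P <= 1.
Proof.
move=> prbg fwd_P; case: w => [u|v] w_P; first exact: forward_path_count_adj_inl.
rewrite -(count_adj_transpose _ (inr v)).
apply: (forward_path_count_adj_inl (PRBG_transpose prbg)).
  by rewrite forward_path_transpose.
by rewrite mem_inl_swap.
Qed.
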